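(* Let $R$ be a finite local Frobenius ring which is not a field, with a fixed primitive additive character $\psi$, and let $\tau$ be any multiplicative character of $R$. Then $$\sum_{a\in R^\times}|K_\tau(a)|^2=\begin{cases}|R|\,|R^\times| & \text{if }\tau\text{ is non-primitive},\\ 2|R|\,|R^\times|-|R|^2 & \text{if }\tau\text{ is primitive}.\end{cases}$$
   Context: All rings are finite and commutative with identity; $R^\times$ is the unit group; $M$ is the maximal ideal. An additive character $(R,+)\to\mathbb{C}^*$ is primitive if the only ideal on which it is identically $1$ is $(0)$; $R$ is Frobenius if such a character exists. A multiplicative character is a homomorphism $R^\times\to\mathbb{C}^*$; its conductor is $R$ if it is trivial, and otherwise the largest ideal $I\subseteq M$ such that it is identically $1$ on $1+I$; it is primitive if its conductor is $(0)$. $K_\tau(a)=\sum_{u\in R^\times}\tau(u)\psi(u+au^{-1})$. *)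

From HB Require Import structures.
From mathcomp Require Import all_boot all_order all_algebra all_field.
Set Implicit Arguments. Unset Strict Implicit. Unset Printing Implicit Defensive.
Import GRing.Theory Num.Theory.
Local Open Scope ring_scope.

Section Defs.
Variable R : finComUnitRingType.

Definition is_ideal (I : {set R}) : Prop :=
  [/\ 0 \in I, (forall x y, x \in I -> y \in I -> x + y \in I)
    & (forall r x, x \in I -> r * x \in I)].

Definition is_maximal_ideal (M : {set R}) : Prop :=
  [/\ is_ideal M, M != [set: R]
    & forall J, is_ideal J -> M \subset J -> J = M \/ J = [set: R]].

Definition is_local_ring : Prop :=
  exists M, is_maximal_ideal M /\ forall N, is_maximal_ideal N -> N = M.

Definition is_field_ring : Prop := forall x : R, x != 0 -> x \is a GRing.unit.

Definition additive_character (psi : R -> algC) : Prop :=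
  (forall x, psi x != 0) /\ (forall x y, psi (x + y) = psi x * psi y).

Definition primitive_additive (psi : R -> algC) : Prop :=
  forall I, is_ideal I -> (forall x, x \in I -> psi x = 1) -> I = [set 0].

Definition mult_character (tau : {unit R} -> algC) : Prop :=
  (forall u, tau u != 0) /\ (forall u v, tau (u * v)%g = tau u * tau v).

Definition trivial_mult (tau : {unit R} -> algC) : Prop := forall u, tau u = 1.

Definition trivial_on_1plus (tau : {unit R} -> algC) (I : {set R}) : Prop :=
  forall u : {unit R}, val u - 1 \in I -> tau u = 1.

Definition is_conductor (M : {set R}) (tau : {unit R} -> algC) (I : {set R}) : Prop :=
  (trivial_mult tau /\ I = [set: R]) \/
  (~ trivial_mult tau /\ [/\ is_ideal I, I \subset M, trivial_on_1plus tau I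
         & forall J, is_ideal J -> J \subset M -> trivial_on_1plus tau J -> J \subset I]).

Definition primitive_mult (M : {set R}) (tau : {unit R} -> algC) : Prop :=
  is_conductor M tau [set 0].

Definition kloosterman (psi : R -> algC) (tau : {unit R} -> algC) (a : R) : algC :=
  \sum_(u : {unit R}) tau u * psi (val u + a * (val u)^-1).

End Defs.

From HB Require Import structures.
From mathcomp Require Import all_boot all_order all_algebra all_field.
From mathcomp Require Import ring.
Import GRing.Theory Num.Theory.
Set Implicit Arguments. Unset Strict Implicit. Unset Printing Implicit Defensive.
Local Open Scope ring_scope.

(* Expanding |K(a)|^2 and summing over a leaves a double sum over units x, y
   weighted by the sum of psi(c u) over units u, with c = x^-1 - y^-1.  In a
   local Frobenius ring that weight is |R| [c = 0] - |M| [c \in ann M], where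
   ann M is the minimal nonzero ideal (#|I| * #|ann I| = #|R| for every ideal).
   The diagonal contributes |R| |R^x|; substituting x = y w in the remainder
   leaves |R| - |M| times the sum of tau over the subgroup 1 + ann M, which is
   |ann M| = |R| / |M| if tau is trivial there and 0 otherwise.  Since every
   nonzero ideal contains ann M, tau is primitive exactly when it is nontrivial
   on 1 + ann M. *)

Lemma conjC_root1 (z : algC) (n : nat) : (0 < n)%N -> z ^+ n = 1 -> z^* = z^-1.
Proof.
move=> n_gt0 zn1; have normz1 : `|z| = 1.
  by apply/eqP; rewrite -(pexpr_eq1 n_gt0) ?normr_ge0 // -normrX zn1 normr1.
by rewrite invC_norm normz1 expr1n invr1 mul1r.
Qed.

Section FiniteCharacters.

Variables (T : finType) (op : T -> T -> T) (chi : T -> algC).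
Hypothesis op_inj : forall x, injective (op x).
Hypothesis chiM : forall x y, chi (op x y) = chi x * chi y.

Lemma char_idem e : chi e != 0 -> op e e = e -> chi e = 1.
Proof. by move=> chie_neq0 ee; apply: (mulfI chie_neq0); rewrite mulr1 -chiM ee. Qed.

Lemma conj_char x : (forall y, chi y != 0) -> (chi x)^* = (chi x)^-1.
Proof.
move=> chi_neq0; apply: (@conjC_root1 _ #|T|); first by apply/card_gt0P; exists x.
have prod_neq0 : \prod_y chi y != 0 by apply/prodf_neq0 => y _.
apply: (mulIf prod_neq0); rewrite mul1r {2}(reindex_inj (@op_inj x)) /=.
by rewrite -prodr_const -big_split; apply: eq_bigr => y _; rewrite chiM.
Qed.

(* Translation by an element [h] of [S] permutes [S], so the sum is
   multiplied by [chi h]. *)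
Lemma sum_char_closed (S : {set T}) :
    {in S &, forall x y, op x y \in S} ->
  \sum_(x in S) chi x = if [forall x in S, chi x == 1] then #|S|%:R else 0.
Proof.
move=> opS; case: ifP => [/forall_inP chi1 | /negbT/forall_inPn [h Sh chih]].
  by rewrite (eq_bigr (fun _ => 1)) ?sumr_const // => x /chi1/eqP.
have hS_eq : op h @: S = S.
  apply/eqP; rewrite eqEcard card_in_imset; last by move=> x y _ _; exact: op_inj.
  by rewrite leqnn andbT; apply/subsetP => _ /imsetP[x Sx ->]; apply: opS.
have : \sum_(x in S) chi x = chi h * \sum_(x in S) chi x.
  rewrite -{1}hS_eq big_imset /=; last by move=> x y _ _; exact: op_inj.
  by rewrite mulr_sumr; apply: eq_bigr => x _; rewrite chiM.
move/eqP; rewrite -subr_eq0 -{1}(mul1r (\sum_(x in S) _)) -mulrBl mulf_eq0.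
by rewrite subr_eq0 eq_sym (negbTE chih) => /eqP.
Qed.

End FiniteCharacters.

Section Ideals.

Variable R : finComUnitRingType.
Implicit Types (I J : {set R}) (x y c : R).

Definition idealb I : bool :=
  [&& 0 \in I, [forall x in I, forall y in I, x + y \in I]
    & [forall r, forall x in I, r * x \in I]].

Lemma idealP I : reflect (is_ideal I) (idealb I).
Proof.
apply: (iffP and3P) => [[I0 /forall_inP ID /forallP IM] | [I0 ID IM]].
  split=> // [x y Ix | r x]; first by move/forall_inP: (ID x Ix); apply.
  by move/forall_inP: (IM r); apply.
split=> //; first by apply/forall_inP => x Ix; apply/forall_inP => y Iy; apply: ID.
by apply/forallP => r; apply/forall_inP; apply: IM.
Qed.

Lemma idealN I x : is_ideal I -> x \in I -> - x \in I.
Proof. by case=> _ _ IM Ix; rewrite -mulN1r IM. Qed.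

Lemma ideal_unitMl I u x :
  is_ideal I -> u \is a GRing.unit -> (u * x \in I) = (x \in I).
Proof.
case=> _ _ IM u_unit; apply/idP/idP; last exact: IM.
by move=> /(IM u^-1); rewrite mulKr.
Qed.

Lemma ideal_eqT J : is_ideal J -> 1 \in J -> J = [set: R].
Proof. by case=> _ _ IM J1; apply/setP => x; rewrite inE -[x]mulr1 IM. Qed.

Lemma ideal_setT : is_ideal [set: R].
Proof. by split=> *; rewrite inE. Qed.

Lemma ideal_set0 : is_ideal [set 0 : R].
Proof.
split=> [|x y|r x]; rewrite ?inE //; first by move=> /eqP-> /eqP->; rewrite addr0.
by move/eqP->; rewrite mulr0.
Qed.

Lemma ideal_scale I c : is_ideal I -> is_ideal [set c * x | x in I].
Proof.
case=> I0 ID IM; split.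
- by apply/imsetP; exists 0; rewrite ?mulr0.
- move=> _ _ /imsetP[x Ix ->] /imsetP[y Iy ->].
  by apply/imsetP; exists (x + y); [exact: ID | rewrite mulrDr].
- move=> r _ /imsetP[x Ix ->]; apply/imsetP; exists (r * x); [exact: IM | exact: mulrCA].
Qed.

Definition ann I : {set R} := [set x | [forall m in I, x * m == 0]].

Lemma annP I x : reflect (forall m, m \in I -> x * m = 0) (x \in ann I).
Proof.
by rewrite inE; apply: (iffP forall_inP) => H m Im; apply/eqP; apply: H.
Qed.

Lemma ideal_ann I : is_ideal (ann I).
Proof.
split.
- by apply/annP => m _; rewrite mul0r.
- by move=> x y /annP xI /annP yI; apply/annP => m Im; rewrite mulrDl xI ?yI ?addr0.
- by move=> r x /annP xI; apply/annP => m Im; rewrite -mulrA xI ?mulr0.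
Qed.

Lemma annT c : (c \in ann [set: R]) = (c == 0).
Proof.
apply/annP/eqP => [cR | -> m _]; last by rewrite mul0r.
by rewrite -[c]mulr1 cR ?inE.
Qed.

Lemma ann_sub I J : I \subset J -> ann J \subset ann I.
Proof. by move=> sIJ; apply/subsetP => x /annP xJ; apply/annP => m /(subsetP sIJ)/xJ. Qed.

Lemma sub_ann_ann I : I \subset ann (ann I).
Proof. by apply/subsetP => x Ix; apply/annP => y /annP yI; rewrite mulrC yI. Qed.

End Ideals.

Section FrobeniusRing.

Variables (R : finComUnitRingType) (psi : R -> algC).
Hypotheses (psi_char : additive_character psi) (psi_prim : primitive_additive psi).
Implicit Types (I J : {set R}) (x y c : R).

Let psi_neq0 x : psi x != 0. Proof. by case: psi_char. Qed.
Let psiD x y : psi (x + y) = psi x * psi y. Proof. by case: psi_char. Qed.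

Lemma psi0 : psi 0 = 1.
Proof. by apply: (char_idem psiD); rewrite ?addr0. Qed.

Lemma psiB x y : psi (x - y) = psi x / psi y.
Proof. by apply: (mulIf (psi_neq0 y)); rewrite -psiD subrK mulfVK. Qed.

Lemma conj_psi x : (psi x)^* = (psi x)^-1.
Proof. exact: (conj_char (@addrI R) psiD x psi_neq0). Qed.

(* Primitivity of [psi] turns "psi is trivial on the ideal cI" into "cI = 0". *)
Lemma sum_psi_ideal I c : is_ideal I ->
  \sum_(x in I) psi (c * x) = if c \in ann I then #|I|%:R else 0.
Proof.
move=> I_ideal; have [I0 ID _] := I_ideal.
have psi_cD x y : psi (c * (x + y)) = psi (c * x) * psi (c * y).
  by rewrite mulrDr psiD.
rewrite (sum_char_closed (@addrI R) psi_cD) => [|x y]; last exact: ID.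
congr (if _ then _ else _); apply/forall_inP/annP => [psi_cI m Im | cI x Ix].
  have cI0 : [set c * x | x in I] = [set 0].
    by apply: psi_prim => [|_ /imsetP[x Ix ->]]; [exact: ideal_scale | exact/eqP/psi_cI].
  by apply/set1P; rewrite -cI0; apply: imset_f.
by rewrite cI ?psi0.
Qed.

Lemma card_ann I : is_ideal I -> (#|I| * #|ann I| = #|R|)%N.
Proof.
move=> I_ideal; apply/eqP; rewrite -(eqr_nat algC); apply/eqP.
transitivity (\sum_y \sum_(x in I) psi (y * x)).
  rewrite natrM; under eq_bigr => y _ do rewrite sum_psi_ideal //.
  by rewrite -big_mkcond sumr_const mulr_natr (eq_card (fun y => erefl (y \in ann I))).
have I0 : 0 \in I by case: I_ideal.
rewrite exchange_big (bigD1 0 I0) /= [X in _ + X]big1 => [|x /andP[_ /negbTE x_neq0]].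
  by rewrite addr0 (eq_bigr (fun _ => 1)) => [|y _]; rewrite ?sumr_const ?mulr0 ?psi0.
under eq_bigr => y _ do rewrite mulrC.
have : \sum_(y in [set: R]) psi (x * y) = 0.
  by rewrite (sum_psi_ideal x (@ideal_setT R)) annT x_neq0.
by rewrite -(eq_bigl _ _ (in_set [pred y | true])).
Qed.

(* [I \subset ann (ann I)], and both sides have [#|R| / #|ann I|] elements. *)
Lemma annK I : is_ideal I -> ann (ann I) = I.
Proof.
move=> I_ideal; apply/eqP; rewrite eq_sym eqEcard sub_ann_ann /=.
have annI_gt0 : (0 < #|ann I|)%N by apply/card_gt0P; exists 0; case: (ideal_ann I).
have annI_ideal := ideal_ann I.
by rewrite -(leq_pmul2l annI_gt0) [X in (_ <= X)%N]mulnC !card_ann.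
Qed.

End FrobeniusRing.

Section Units.

Variable R : finComUnitRingType.
Implicit Type I : {set R}.

Lemma sum_units (V : nmodType) (F : R -> V) :
  \sum_(u : {unit R}) F (val u) = \sum_(x | x \is a GRing.unit) F x.
Proof.
symmetry; rewrite (reindex (val : {unit R} -> R)) /=.
  by apply: eq_bigl => u; rewrite (valP u).
exists (insubd (1%g : {unit R})) => x x_unit; first by rewrite valKd.
by rewrite insubdK.
Qed.

Definition one_plus I : {set {unit R}} := [set u | val u - 1 \in I].

Lemma one_plusM I : is_ideal I -> {in one_plus I &, forall u v, (u * v)%g \in one_plus I}.
Proof.
case=> _ ID IM u v; rewrite !inE FinRing.val_unitM => Iu Iv.
have -> : val u * val v - 1 = (val u - 1) * (val v - 1) + ((val u - 1) + (val v - 1)).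
  by ring.
by apply: (ID); [exact: IM | exact: ID].
Qed.

Lemma trivial_on_1plusP (tau : {unit R} -> algC) I :
  reflect (trivial_on_1plus tau I) [forall u in one_plus I, tau u == 1].
Proof.
apply: (iffP forall_inP) => [tau1 u Iu | tau1 u]; first by apply/eqP/tau1; rewrite inE.
by rewrite inE => /tau1->.
Qed.

Lemma unit_mulI (v : {unit R}) : injective (fun w => (v * w)%g).
Proof.
by move=> w1 w2 /(congr1 val); rewrite !FinRing.val_unitM => /(mulrI (valP v))/val_inj.
Qed.

Lemma one_plus1 I : is_ideal I -> 1%g \in one_plus I.
Proof. by case=> I0 _ _; rewrite inE subrr. Qed.

End Units.

Section MultCharacter.

Variables (R : finComUnitRingType) (tau : {unit R} -> algC).
Hypothesis tau_char : mult_character tau.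

Lemma tau_neq0 u : tau u != 0. Proof. by case: tau_char. Qed.
Lemma tauM u v : tau (u * v)%g = tau u * tau v. Proof. by case: tau_char. Qed.

Lemma tau1 : tau 1%g = 1.
Proof. by apply: (char_idem tauM); rewrite ?tau_neq0 ?mulg1. Qed.

Lemma conj_tau u : (tau u)^* = (tau u)^-1.
Proof. exact: (conj_char (@unit_mulI R) tauM u tau_neq0). Qed.

End MultCharacter.

Section LocalRing.

Variables (R : finComUnitRingType) (M : {set R}).
Hypotheses (M_max : is_maximal_ideal M) (M_unique : forall N, is_maximal_ideal N -> N = M).
Implicit Types (I J : {set R}) (x : R).

Lemma ideal_max : is_ideal M. Proof. by case: M_max. Qed.

Lemma one_notin_max : 1 \notin M.
Proof.
case: M_max => M_ideal M_neqT _; apply/negP => /(ideal_eqT M_ideal) MT.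
by rewrite MT eqxx in M_neqT.
Qed.

(* A proper ideal of maximal size above [J] is maximal, hence equal to [M]. *)
Lemma sub_max_ideal J : is_ideal J -> 1 \notin J -> J \subset M.
Proof.
move=> J_ideal J1.
pose P N := [&& idealb N, J \subset N & 1 \notin N].
have PJ : P J by apply/and3P; split=> //; apply/idealP.
case: (@arg_maxnP _ J P (fun N => #|N|) PJ) => N /and3P[/idealP N_ideal sJN N1] N_biggest.
suff /M_unique <- : is_maximal_ideal N by [].
split=> // [|K K_ideal sNK].
  by apply: contraNneq N1 => ->; rewrite inE.
have [K1 | K1] := boolP (1 \in K); first by right; apply: ideal_eqT.
left; apply/eqP; rewrite eq_sym eqEcard sNK /=; apply: N_biggest.
by apply/and3P; split=> //; [apply/idealP | exact: subset_trans sNK].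
Qed.

Lemma mem_max_ideal x : (x \in M) = (x \isn't a GRing.unit).
Proof.
have [_ _ MM] := ideal_max.
apply/idP/idP => [Mx | x_nonunit].
  by apply: contra one_notin_max => x_unit; rewrite -(mulVr x_unit) MM.
have xR_sub : [set x * r | r in [set: R]] \subset M.
  apply: sub_max_ideal; first by apply: ideal_scale; apply: ideal_setT.
  apply: contra x_nonunit => /imsetP[r _ r_inv]; apply/unitrP.
  by exists r; rewrite mulrC -r_inv.
by apply: (subsetP xR_sub); apply/imsetP; exists 1; rewrite ?inE ?mulr1.
Qed.

Lemma unit1D_max x : x \in M -> 1 + x \is a GRing.unit.
Proof.
have [_ MD _] := ideal_max.
move=> Mx; apply/negPn; rewrite -mem_max_ideal; apply: contra one_notin_max => M1x.
by rewrite -[1](addrK x); apply: MD => //; apply: idealN ideal_max _.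
Qed.

Lemma card_units_max : (#|{: {unit R}}| + #|M|)%N = #|R|.
Proof.
have -> : #|M| = #|[predC [pred x : R | x \is a GRing.unit]]|.
  by apply: eq_card => x; rewrite mem_max_ideal !inE.
by rewrite card_sub cardC.
Qed.

Lemma card_one_plus I : I \subset M -> #|one_plus I| = #|I|.
Proof.
move=> sIM; rewrite -(@card_in_imset _ _ (fun u : {unit R} => val u - 1)); last first.
  by move=> u v _ _ /addIr/val_inj.
congr #|pred_of_set _|; apply/setP => x.
apply/imsetP/idP => [[u Iu ->] | Ix]; first by rewrite inE in Iu.
have x1_unit := unit1D_max (subsetP sIM x Ix).
exists (insubd (1%g : {unit R}) (1 + x));
  by rewrite ?inE (insubdK _ x1_unit) (addrC 1 x) addrK.
Qed.

Lemma ann_max_sub : ~ is_field_ring R -> ann M \subset M.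
Proof.
move=> R_not_field; apply/subsetP => a /annP aM; rewrite mem_max_ideal.
apply/negP => a_unit; apply: R_not_field => x x_neq0; apply/negPn/negP => x_nonunit.
by rewrite -(mulKr a_unit x) aM ?mulr0 ?eqxx ?mem_max_ideal in x_neq0.
Qed.

End LocalRing.

Section LocalFrobeniusRing.

Variables (R : finComUnitRingType) (M : {set R}) (psi : R -> algC).
Hypotheses (M_max : is_maximal_ideal M) (M_unique : forall N, is_maximal_ideal N -> N = M).
Hypotheses (psi_char : additive_character psi) (psi_prim : primitive_additive psi).

Lemma ann_max_neq0 : ann M != [set 0].
Proof.
apply/eqP => annM0; have := card_ann psi_char psi_prim (ideal_max M_max).
rewrite annM0 cards1 muln1 => cardM; have := one_notin_max M_max.
suff -> : M = [set: R] by rewrite inE.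
by apply/eqP; rewrite eqEcard subsetT cardsT -cardM leqnn.
Qed.

(* [ann M] is the minimal nonzero ideal: [ann J] is proper, so it lies in [M]. *)
Lemma ann_max_minimal J : is_ideal J -> J != [set 0] -> ann M \subset J.
Proof.
move=> J_ideal J_neq0; rewrite -(annK psi_char psi_prim J_ideal) ann_sub //.
apply: (sub_max_ideal M_unique (ideal_ann J)); apply: contra J_neq0 => /annP J0.
apply/eqP/setP => x; rewrite inE; apply/idP/eqP => [/J0 | ->]; first by rewrite mul1r.
by case: J_ideal.
Qed.

Lemma sum_psi_units c :
  \sum_(u : {unit R}) psi (c * val u) =
  (c == 0)%:R * #|R|%:R - (c \in ann M)%:R * #|M|%:R.
Proof.
have sum_M := sum_psi_ideal psi_char psi_prim c (ideal_max M_max).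
have sum_R := sum_psi_ideal psi_char psi_prim c (@ideal_setT R).
rewrite annT cardsT (bigID (fun x => x \is a GRing.unit)) /= in sum_R.
rewrite [X in _ + X](eq_bigl (fun x => x \in M)) in sum_R => [|x]; last first.
  by rewrite inE (mem_max_ideal M_max M_unique).
rewrite (sum_units (fun x => psi (c * x))).
rewrite (eq_bigl (fun x => (x \in [set: R]) && (x \is a GRing.unit))) => [|x]; last first.
  by rewrite inE.
rewrite -[LHS](addrK (\sum_(x in M) psi (c * x))) sum_R sum_M.
by case: (c == 0); case: (c \in ann M); rewrite ?mul1r ?mul0r ?subr0 ?sub0r ?addrK ?add0r.
Qed.

Lemma primitive_multP (tau : {unit R} -> algC) :
  ~ is_field_ring R -> mult_character tau ->
  primitive_mult M tau <-> ~ trivial_on_1plus tau (ann M).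
Proof.
move=> R_not_field tau_char; split.
  case=> [[_ /setP/(_ 1)] | [_ [_ _ _ conductor_max]] triv].
    by rewrite !inE oner_eq0.
  have := conductor_max _ (ideal_ann M) (ann_max_sub M_max M_unique R_not_field) triv.
  apply/negP; apply: contra ann_max_neq0 => annM0.
  by rewrite eqEsubset annM0 sub1set; case: (ideal_ann M).
move=> not_triv; right; split=> [triv | ].
  by apply: not_triv => u _; apply: triv.
split; first exact: ideal_set0.
- by rewrite sub1set; case: (ideal_max M_max).
- move=> u; rewrite inE subr_eq0 => /eqP u1.
  by rewrite (_ : u = 1%g) ?tau1 //; apply: val_inj.
- move=> J J_ideal _ triv_J; have [// | J_not_sub0] := boolP (J \subset [set 0]).
  have J_neq0 : J != [set 0] by apply: contraNneq J_not_sub0 => ->.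
  by case: not_triv => u /(subsetP (ann_max_minimal J_ideal J_neq0)) /triv_J.
Qed.

End LocalFrobeniusRing.

Lemma sum_indicator (T : finType) (V : pzSemiRingType) (i : T) (a : V) :
  \sum_(j : T) (j == i)%:R * a = a.
Proof. by rewrite (bigD1 i) //= eqxx mul1r big1 ?addr0 // => j /negbTE->; rewrite mul0r. Qed.

Section Kloosterman.

Variables (R : finComUnitRingType) (M : {set R}).
Variables (psi : R -> algC) (tau : {unit R} -> algC).
Hypotheses (M_max : is_maximal_ideal M) (M_unique : forall N, is_maximal_ideal N -> N = M).
Hypotheses (psi_char : additive_character psi) (psi_prim : primitive_additive psi).
Hypothesis tau_char : mult_character tau.

Lemma sum_normK_expand :
  \sum_(a : {unit R}) `|kloosterman psi tau (val a)| ^+ 2 =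
  \sum_(x : {unit R}) \sum_(y : {unit R}) tau x / tau y * psi (val x - val y) *
    \sum_(a : {unit R}) psi (((val x)^-1 - (val y)^-1) * val a).
Proof.
have [_ psiD] := psi_char.
under eq_bigr => a _ do rewrite normCK /kloosterman rmorph_sum big_distrlr /=.
rewrite exchange_big; apply: eq_bigr => x _; rewrite exchange_big; apply: eq_bigr => y _.
rewrite mulr_sumr; apply: eq_bigr => a _.
rewrite rmorphM /= conj_tau // conj_psi // mulrACA -psiB // -[RHS]mulrA -psiD.
by congr (_ * psi _); ring.
Qed.

Lemma sum_normK_split :
  \sum_(a : {unit R}) `|kloosterman psi tau (val a)| ^+ 2 =
  #|R|%:R * #|{: {unit R}}|%:R - #|M|%:R *
    \sum_(x : {unit R}) \sum_(y : {unit R})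
      ((val x)^-1 - (val y)^-1 \in ann M)%:R * (tau x / tau y * psi (val x - val y)).
Proof.
have inv_eq0 (x y : {unit R}) : ((val x)^-1 - (val y)^-1 == 0) = (y == x).
  by rewrite subr_eq0 (inj_eq invr_inj) val_eqE eq_sym.
rewrite sum_normK_expand; transitivity (\sum_(x : {unit R}) \sum_(y : {unit R})
    ((y == x)%:R * #|R|%:R - #|M|%:R * (((val x)^-1 - (val y)^-1 \in ann M)%:R *
       (tau x / tau y * psi (val x - val y))))).
  apply: eq_bigr => x _; apply: eq_bigr => y _.
  rewrite (sum_psi_units M_max M_unique psi_char psi_prim) inv_eq0.
  have [-> | _] := eqVneq y x; last by rewrite /=; ring.
  by rewrite subrr divff ?tau_neq0 // psi0 //=; ring.
under eq_bigr => x _ do rewrite sumrB sum_indicator -mulr_sumr.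
by rewrite sumrB -mulr_sumr sumr_const [in RHS]mulr_natr.
Qed.

Lemma sum_off_diagonal :
  \sum_(x : {unit R}) \sum_(y : {unit R})
      ((val x)^-1 - (val y)^-1 \in ann M)%:R * (tau x / tau y * psi (val x - val y)) =
  #|R|%:R - #|M|%:R * \sum_(w in one_plus (ann M)) tau w.
Proof.
have A_ideal := ideal_ann M.
have mem_yw (y w : {unit R}) :
    ((val (y * w)%g)^-1 - (val y)^-1 \in ann M) = (w \in one_plus (ann M)).
  have yw_unit : val y * val w \is a GRing.unit.
    by rewrite unitrM; apply/andP; split; apply: valP.
  have Nyw_unit : - (val y * val w) \is a GRing.unit by rewrite unitrN.
  rewrite FinRing.val_unitM -(ideal_unitMl _ A_ideal Nyw_unit) [in RHS]inE.
  by rewrite mulNr mulrBr mulrV // mulrAC mulrV ?(valP y) // mul1r opprB.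
rewrite exchange_big /=.
under eq_bigr => y _ do rewrite (reindex_inj (@unit_mulI _ y)) /=.
rewrite exchange_big /=.
transitivity (\sum_(w : {unit R})
    (w \in one_plus (ann M))%:R * tau w * \sum_(y : {unit R}) psi ((val w - 1) * val y)).
  apply: eq_bigr => w _; rewrite mulr_sumr; apply: eq_bigr => y _.
  rewrite mem_yw (tauM tau_char) [tau y * _ / _]mulrC mulKf ?tau_neq0 // mulrA.
  by congr (_ * psi _) => /=; ring.
transitivity (\sum_(w : {unit R})
    ((w == 1%g)%:R * #|R|%:R - #|M|%:R * ((w \in one_plus (ann M))%:R * tau w))).
  apply: eq_bigr => w _; rewrite (sum_psi_units M_max M_unique psi_char psi_prim).
  have -> : (val w - 1 \in ann M) = (w \in one_plus (ann M)) by rewrite [in RHS]inE.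
  have [-> | w_neq1] := eqVneq w 1%g.
    by rewrite one_plus1 // (tau1 tau_char) FinRing.val_unit1 subrr eqxx /=; ring.
  have -> : (val w - 1 == 0) = false.
    by rewrite subr_eq0; apply: contraNF w_neq1 => /eqP w1; apply/eqP/val_inj.
  by case: (w \in _) => /=; ring.
rewrite sumrB sum_indicator -mulr_sumr [in RHS]big_mkcond /=.
by congr (_ - _ * _); apply: eq_bigr => w _; case: (w \in _); rewrite ?mul1r ?mul0r.
Qed.

Lemma sum_normK :
  \sum_(a : {unit R}) `|kloosterman psi tau (val a)| ^+ 2 =
  #|R|%:R * #|{: {unit R}}|%:R -
    #|M|%:R * (#|R|%:R - #|M|%:R * \sum_(w in one_plus (ann M)) tau w).
Proof. by rewrite sum_normK_split sum_off_diagonal. Qed.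

End Kloosterman.

Theorem mainTheorem7 (R : finComUnitRingType) (M : {set R})
  (hM : is_maximal_ideal M) (hloc : forall N, is_maximal_ideal N -> N = M)
  (hnf : ~ is_field_ring R)
  (psi : R -> algC) (hpsi : additive_character psi) (hprim : primitive_additive psi)
  (tau : {unit R} -> algC) (htau : mult_character tau) :
  (~ primitive_mult M tau ->
    \sum_(a : {unit R}) `|kloosterman psi tau (val a)| ^+ 2 =
      #|R|%:R * #|{: {unit R}}|%:R) /\
  (primitive_mult M tau ->
    \sum_(a : {unit R}) `|kloosterman psi tau (val a)| ^+ 2 =
      2%:R * #|R|%:R * #|{: {unit R}}|%:R - (#|R|%:R) ^+ 2).
Proof.
have primP := primitive_multP hM hloc hpsi hprim hnf htau.
rewrite (sum_normK hM hloc hpsi hprim htau).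
rewrite (sum_char_closed (@unit_mulI R) (tauM htau) (one_plusM (ideal_ann M))).
case: (trivial_on_1plusP tau (ann M)) => [triv | not_triv]; split=> [not_prim | prim].
- rewrite (card_one_plus hM hloc (ann_max_sub hM hloc hnf)) -(natrM _ #|M|).
  by rewrite (card_ann hpsi hprim (ideal_max hM)) subrr mulr0 subr0.
- by case/primP: prim.
- by case: not_prim; apply/primP.
- by rewrite mulr0 subr0 -(card_units_max hM hloc) natrD; ring.
Qed.
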